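(* Let $\mathbf{Z_1},\mathbf{Z_2},\mathbf{Z_3}\in\mathrm{GF}(2)^{6\times 30}$ be constructed from an arbitrary $\mathbf{z}\in\mathrm{GF}(2)^{2\times30}$ as follows: rows 1–2 of $\mathbf{Z_1}$ equal $\mathbf{z}$, rows 3–4 of $\mathbf{Z_1}$ equal $f$ applied to rows 1–2, rows 5–6 of $\mathbf{Z_1}$ equal $f$ applied to rows 3–4, $\mathbf{Z_2}=g(\mathbf{Z_1})$, $\mathbf{Z_3}=g(\mathbf{Z_2})$. Partition the 27 demand vectors $(d_1,d_2,d_3)\in\{A,B,C\}^3$ into five parts: Part 1: $AAA, BBB, CCC$; Part 2: $ABC, BCA, CAB$; Part 3: $ACB, CBA, BAC$; Part 4: $ABB, BAB, BBA, BCC, CBC, CCB, CAA, ACA, AAC$; Part 5: $ACC, CAC, CCA, CBB, BCB, BBC, BAA, ABA, AAB$. Then for any two demand vectors $D,D'$ in the same part, there is a column permutation $\pi$ in the group generated by $f$ and $g$ such that for every binary matrix $\mathbf{X}$ with 30 columns, if $\mathbf{X}$ is a valid delivery matrix for demand $D$ then $\pi(\mathbf{X})$ is a valid delivery matrix for demand $D'$ (and has the same number of rows).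
   Context: Three files $A=W_1$, $B=W_2$, $C=W_3$ are each split into 10 subfiles $A_1,\dots,A_{10}$, $B_1,\dots,B_{10}$, $C_1,\dots,C_{10}$, i.i.d. uniform; the information vector is $\mathbf{W}=[A_1,\dots,A_{10},B_1,\dots,B_{10},C_1,\dots,C_{10}]$, and a binary matrix $\mathbf{G}$ with 30 columns represents the linear code $\mathbf{G}\mathbf{W}^T$. Let $\mathbf{W_A}=[I_{10}\ 0\ 0]$, $\mathbf{W_B}=[0\ I_{10}\ 0]$, $\mathbf{W_C}=[0\ 0\ I_{10}]$ be the generator matrices of the files. User $i\in\{1,2,3\}$ caches $\mathbf{Z_i}\mathbf{W}^T$. For a demand vector $D=(d_1,d_2,d_3)\in\{A,B,C\}^3$ (user $i$ requests file $d_i$), a binary matrix $\mathbf{X}$ with 30 columns is a valid delivery matrix for $D$ if for each $i=1,2,3$, user $i$ can recover file $d_i$ from its cache and $\mathbf{X}\mathbf{W}^T$, i.e., $\operatorname{rank}\begin{bmatrix}\mathbf{Z_i}\\ \mathbf{X}\end{bmatrix}=\operatorname{rank}\begin{bmatrix}\mathbf{Z_i}\\ \mathbf{W_{d_i}}\\ \mathbf{X}\end{bmatrix}$ over $\mathrm{GF}(2)$. Column operations (applied to each row of a matrix with 30 columns): $f$ moves the coefficient of $A_i$ to the position of $B_i$, of $B_i$ to $C_i$, and of $C_i$ to $A_i$ ($i=1,\dots,10$), i.e., relabels files $A\mapsto B\mapsto C\mapsto A$; $g$ moves, within each file, the coefficient of subfile $i$ to subfile $i+3$ reduced into $\{1,\dots,9\}$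 modulo 9 (so $7\mapsto1$, $8\mapsto2$, $9\mapsto3$) for $1\le i\le 9$, and fixes subfile $10$. *)

From HB Require Import structures.
From mathcomp Require Import all_boot all_order all_algebra all_fingroup.
From Stdlib Require Import List.
From mathcomp Require Import zify.
Set Implicit Arguments. Unset Strict Implicit. Unset Printing Implicit Defensive.
Import GRing.Theory.

(* Coordinates of W (0-based): A_{i+1} at column i, B_{i+1} at 10+i,
   C_{i+1} at 20+i (i = 0..9).  Entries in GF(2) = 'F_2. *)

(* A column operation is represented by its "source map" s : 'I_30 -> 'I_30,
   acting on a matrix M by col_perm s M = \matrix_(i,j) M i (s j), i.e. the new
   coefficient at column j is the old coefficient at column (s j). *)

(* f : coefficient of A_i moves to B_i, B_i to C_i, C_i to A_i;
   so the new coefficient at column j comes from column j - 10 (mod 30). *)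
Definition fsrc (j : 'I_30) : 'I_30 := inord ((nat_of_ord j + 20) %% 30)%N.

(* g : within each file, subfile i (1..9) moves to subfile i+3 reduced mod 9
   into 1..9; subfile 10 fixed.  0-based in-file index p (0..8): new
   coefficient at p comes from (p + 6) mod 9; p = 9 fixed. *)
Definition gsrc (j : 'I_30) : 'I_30 :=
  let k := (j %/ 10)%N in let p := (j %% 10)%N in
  inord (if p == 9%N then nat_of_ord j else (10 * k + (p + 6) %% 9)%N).

Lemma fsrc_inj : injective fsrc.
Proof.
move=> [x hx] [y hy] /(congr1 val); rewrite /= !inordK ?ltn_mod // => h.
move: h => /= h; apply/val_inj => /=; lia.
Qed.

Lemma gsrc_lt (j : 'I_30) :
  ((if (j %% 10 == 9)%N then nat_of_ord j else 10 * (j %/ 10) + ((j %% 10) + 6) %% 9) < 30)%N.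
Proof. case: j => j hj /=; case: ifP => _ //; lia. Qed.

Lemma gsrc_inj : injective gsrc.
Proof.
move=> x y /(congr1 val); rewrite /gsrc /= !inordK ?gsrc_lt //.
case: x y => [x hx] [y hy] /= h; apply/val_inj => /=; move: h.
case: ifP => /eqP hx'; case: ifP => /eqP hy'; lia.
Qed.

Definition fperm : {perm 'I_30} := perm fsrc_inj.
Definition gperm : {perm 'I_30} := perm gsrc_inj.

Definition fg_group : {set {perm 'I_30}} := <<[set fperm; gperm]>>%g.

Local Open Scope ring_scope.

Definition Z1 (z : 'M['F_2]_(2, 30)) : 'M['F_2]_(2 + (2 + 2), 30) :=
  col_mx z (col_mx (col_perm fperm z) (col_perm fperm (col_perm fperm z))).
Definition Z2 z := col_perm gperm (Z1 z).
Definition Z3 z := col_perm gperm (Z2 z).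

Definition Zuser (z : 'M['F_2]_(2, 30)) (i : 'I_3) : 'M['F_2]_(2 + (2 + 2), 30) :=
  match nat_of_ord i with 0%N => Z1 z | 1%N => Z2 z | _ => Z3 z end.

Inductive file := FA | FB | FC.

Definition file_idx (d : file) : nat := match d with FA => 0 | FB => 1 | FC => 2 end.

(* Generator matrix of file d: W_A = [I 0 0], W_B = [0 I 0], W_C = [0 0 I]. *)
Definition Wfile (d : file) : 'M['F_2]_(10, 30) :=
  \matrix_(i < 10, j < 30) (nat_of_ord j == 10 * file_idx d + i)%N%:R.

Definition demand := (file * file * file)%type.

Definition dem_at (D : demand) (i : 'I_3) : file :=
  match nat_of_ord i with 0%N => D.1.1 | 1%N => D.1.2 | _ => D.2 end.

Definition valid_delivery (Z : 'I_3 -> 'M['F_2]_(2 + (2 + 2), 30))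
    (D : demand) (m : nat) (X : 'M['F_2]_(m, 30)) : Prop :=
  forall i : 'I_3,
    \rank (col_mx (Z i) X) = \rank (col_mx (Z i) (col_mx (Wfile (dem_at D i)) X)).

Definition parts : list (list demand) :=
  [:: [:: (FA,FA,FA); (FB,FB,FB); (FC,FC,FC)];
      [:: (FA,FB,FC); (FB,FC,FA); (FC,FA,FB)];
      [:: (FA,FC,FB); (FC,FB,FA); (FB,FA,FC)];
      [:: (FA,FB,FB); (FB,FA,FB); (FB,FB,FA); (FB,FC,FC); (FC,FB,FC);
          (FC,FC,FB); (FC,FA,FA); (FA,FC,FA); (FA,FA,FC)];
      [:: (FA,FC,FC); (FC,FA,FC); (FC,FC,FA); (FC,FB,FB); (FB,FC,FB);
          (FB,FB,FC); (FB,FA,FA); (FA,FB,FA); (FA,FA,FB)]].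

(* A delivery X is valid for demand D exactly when, for each user i, the rows
   of W_{d_i} lie in the row space of [Z_i; X].  Column permutations act on
   row spaces, so it suffices to see how f and g move caches and files.
   f relabels the files A -> B -> C -> A and maps every cache into itself
   (the three blocks of Z1 are cyclically permuted, and f commutes with g);
   g maps every file into itself and carries the cache of user i to that of
   user i + 1.  Hence f transports valid deliveries of (d1, d2, d3) to valid
   deliveries of the relabelled demand, and g to those of (d3, d1, d2).  Each
   of the five parts is an orbit of the group generated by these two actions
   on demands, which is checked by computation. *)

From HB Require Import structures.
From mathcomp Require Import all_boot all_order all_algebra all_fingroup.
From Stdlib Require Import List.
From mathcomp Require Import zify.
Set Implicit Arguments. Unset Strict Implicit. Unset Printing Implicit Defensive.
Import GRing.Theory.
Local Open Scope ring_scope.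

Section ColPermRowSpace.

Variables (F : fieldType) (n : nat).
Implicit Type s : 'S_n.

Lemma sub_col_mxl m1 m2 (A : 'M[F]_(m1, n)) (B : 'M_(m2, n)) : (A <= col_mx A B)%MS.
Proof. by rewrite -addsmxE addsmxSl. Qed.

Lemma sub_col_mxr m1 m2 (A : 'M[F]_(m1, n)) (B : 'M_(m2, n)) : (B <= col_mx A B)%MS.
Proof. by rewrite -addsmxE addsmxSr. Qed.

Lemma eq_mxrank_col_mx_sub m1 m2 m3
    (Z : 'M[F]_(m1, n)) (W : 'M_(m2, n)) (X : 'M_(m3, n)) :
  (\rank (col_mx Z X) == \rank (col_mx Z (col_mx W X))) = (W <= col_mx Z X)%MS.
Proof.
have eqT : (col_mx Z (col_mx W X) :=: Z + (W + X))%MS.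
  by apply: eqmx_trans (eqmx_sym (addsmxE _ _)) (adds_eqmx _ (eqmx_sym (addsmxE _ _))).
rewrite eqT -addsmxE (mxrank_leqif_sup _).2; last exact: addsmxS (submx_refl Z) (addsmxSr W X).
by rewrite -addsmxE addsmx_sub addsmxSl addsmx_sub addsmxSr !andbT.
Qed.

Lemma mxrank_col_perm m s (A : 'M[F]_(m, n)) : \rank (col_perm s A) = \rank A.
Proof. by rewrite col_permE mxrankMfree // row_free_unit unitmx_perm. Qed.

Lemma col_perm_col_mx m1 m2 s (A : 'M[F]_(m1, n)) (B : 'M_(m2, n)) :
  col_perm s (col_mx A B) = col_mx (col_perm s A) (col_perm s B).
Proof. by rewrite !col_permE mul_col_mx. Qed.

Lemma col_permS m1 m2 s (A : 'M[F]_(m1, n)) (B : 'M_(m2, n)) :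
  (A <= B)%MS -> (col_perm s A <= col_perm s B)%MS.
Proof. by rewrite !col_permE; apply: submxMr. Qed.

Lemma col_perm_sub_sym m s (A : 'M[F]_(m, n)) :
  (col_perm s A <= A)%MS -> (A <= col_perm s A)%MS.
Proof.
by move=> sAs; rewrite -(mxrank_leqif_sup sAs).2 mxrank_col_perm.
Qed.

Lemma col_perm_transfer_sub m1 m2 m3 m1' m2' s
    (Z : 'M[F]_(m1, n)) (W : 'M_(m2, n)) (X : 'M_(m3, n))
    (Z' : 'M_(m1', n)) (W' : 'M_(m2', n)) :
  (col_perm s Z <= Z')%MS -> (W' <= col_perm s W)%MS ->
  (W <= col_mx Z X)%MS -> (W' <= col_mx Z' (col_perm s X))%MS.
Proof.
move=> sZ sW /(col_permS s); rewrite col_perm_col_mx -!addsmxE => sWZX.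
exact: submx_trans sW (submx_trans sWZX (addsmxS sZ (submx_refl _))).
Qed.

Lemma col_perm_order3 m s (A : 'M[F]_(m, n)) :
  (s ^+ 3 = 1)%g -> col_perm s (col_perm s (col_perm s A)) = A.
Proof.
move=> s3; rewrite -!col_permM.
have -> : (s * s * s = s ^+ 3)%g by rewrite !expgSr expg0 mul1g.
by rewrite s3 col_perm1.
Qed.

End ColPermRowSpace.

Lemma val_fsrc j : val (fsrc j) = ((j + 20) %% 30)%N.
Proof. by apply: inordK; rewrite ltn_mod. Qed.

Lemma val_gsrc j :
  val (gsrc j) = (if j %% 10 == 9 then nat_of_ord j else 10 * (j %/ 10) + (j %% 10 + 6) %% 9)%N.
Proof. exact: inordK (gsrc_lt j). Qed.

Lemma fperm3 : (fperm ^+ 3 = 1)%g.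
Proof.
apply/permP => j; apply/val_inj; rewrite !expgSr expg0 mul1g perm1 !permM !permE /= !val_fsrc.
case: j => j /= lt_j30; lia.
Qed.

Lemma gperm3 : (gperm ^+ 3 = 1)%g.
Proof.
apply/permP => j; apply/val_inj; rewrite !expgSr expg0 mul1g perm1 !permM !permE /= !val_gsrc.
by case: j => j /=; do 30 case: j => [//|j].
Qed.

Lemma fpermC : commute fperm gperm.
Proof.
apply/permP => j; apply/val_inj; rewrite !permM !permE !val_gsrc !val_fsrc ?val_gsrc.
by case: j => j /=; do 30 case: j => [//|j].
Qed.

Definition next_file (d : file) : file :=
  match d with FA => FB | FB => FC | FC => FA end.

Lemma col_perm_fperm_Wfile d : col_perm fperm (Wfile d) = Wfile (next_file d).
Proof.
apply/matrixP => r j; rewrite !mxE permE val_fsrc.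
by case: r j => [r lt_r10] [j lt_j30]; case: d => /=; congr (_ %:R); lia.
Qed.

Definition gperm_row (r : 'I_10) : 'I_10 :=
  inord (if r == 9 :> nat then 9 else (r + 3) %% 9)%N.

Lemma Wfile_gperm_sub d : (Wfile d <= col_perm gperm (Wfile d))%MS.
Proof.
apply: col_perm_sub_sym; rewrite (_ : col_perm _ _ = rowsub gperm_row (Wfile d)) ?rowsub_sub //.
apply/matrixP => r j; rewrite !mxE permE val_gsrc /gperm_row inordK; last first.
  by case: ifP => // _; rewrite ltnS ltnW // ltn_mod.
by case: r j => [r lt_r10] [j lt_j30]; case: d => /=; congr (_ %:R); case: ifP; case: ifP; lia.
Qed.

Lemma Z1_fperm_sub z : (col_perm fperm (Z1 z) <= Z1 z)%MS.
Proof.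
rewrite /Z1 !col_perm_col_mx col_perm_order3 ?fperm3 // !col_mx_sub sub_col_mxl.
by rewrite !(submx_trans _ (sub_col_mxr z _)) ?sub_col_mxl ?sub_col_mxr.
Qed.

Lemma Zuser_fperm_sub z i : (col_perm fperm (Zuser z i) <= Zuser z i)%MS.
Proof.
have col_perm_fgC m (A : 'M['F_2]_(m, 30)) :
    col_perm fperm (col_perm gperm A) = col_perm gperm (col_perm fperm A).
  by rewrite -!col_permM fpermC.
case: i => [[|[|[|i]]] lt_i3] //; rewrite /Zuser /= ?/Z3 /Z2 ?col_perm_fgC.
- exact: Z1_fperm_sub.
- exact/col_permS/Z1_fperm_sub.
- exact/col_permS/col_permS/Z1_fperm_sub.
Qed.

Lemma Zuser_gperm z (i : 'I_3) : col_perm gperm (Zuser z i) = Zuser z (i + 1).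
Proof.
case: i => [[|[|[|i]]] lt_i3] //; rewrite /Zuser /=.
by rewrite /Z3 /Z2 col_perm_order3 ?gperm3.
Qed.

Lemma valid_deliveryP Z D m (X : 'M['F_2]_(m, 30)) :
  valid_delivery Z D X <-> forall i, (Wfile (dem_at D i) <= col_mx (Z i) X)%MS.
Proof.
split=> hX i; first by rewrite -eq_mxrank_col_mx_sub hX.
by apply/eqP; rewrite eq_mxrank_col_mx_sub.
Qed.

Lemma valid_delivery_col_perm Z D D' s :
    (forall i', exists2 i, (col_perm s (Z i) <= Z i')%MS
       & (Wfile (dem_at D' i') <= col_perm s (Wfile (dem_at D i)))%MS) ->
  forall m (X : 'M_(m, 30)), valid_delivery Z D X -> valid_delivery Z D' (col_perm s X).
Proof.
move=> hs m X /valid_deliveryP hX; apply/valid_deliveryP => i'.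
by have [i sZ sW] := hs i'; apply: col_perm_transfer_sub sZ sW (hX i).
Qed.

Definition transferable z (D D' : demand) : Prop :=
  exists2 pi : {perm 'I_30}, pi \in fg_group &
    forall m (X : 'M['F_2]_(m, 30)),
      valid_delivery (Zuser z) D X -> valid_delivery (Zuser z) D' (col_perm pi X).

Lemma transferable_refl z D : transferable z D D.
Proof. by exists 1%g; [exact: group1 | move=> m X; rewrite col_perm1]. Qed.

Lemma transferable_trans z D1 D2 D3 :
  transferable z D1 D2 -> transferable z D2 D3 -> transferable z D1 D3.
Proof.
move=> [p1 p1_fg v12] [p2 p2_fg v23]; exists (p2 * p1)%g; first exact: groupM.
by move=> m X /v12 /v23; rewrite col_permM.
Qed.

Definition relabel_demand (D : demand) : demand :=
  (next_file D.1.1, next_file D.1.2, next_file D.2).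

Definition rotate_demand (D : demand) : demand := (D.2, D.1.1, D.1.2).

Lemma transferable_relabel z D : transferable z D (relabel_demand D).
Proof.
exists fperm; first by rewrite mem_gen // !inE eqxx.
apply: valid_delivery_col_perm => i; exists i; first exact: Zuser_fperm_sub.
by rewrite col_perm_fperm_Wfile; case: i => [[|[|[|i]]] lt_i3].
Qed.

Lemma transferable_rotate z D : transferable z D (rotate_demand D).
Proof.
exists gperm; first by rewrite mem_gen // !inE eqxx orbT.
apply: valid_delivery_col_perm => i; exists (i - 1); first by rewrite Zuser_gperm subrK.
suff -> : dem_at (rotate_demand D) i = dem_at D (i - 1) by apply: Wfile_gperm_sub.
by case: i => [[|[|[|i]]] lt_i3].
Qed.

Definition file_of_idx (k : nat) : file :=
  match k with 0 => FA | 1 => FB | _ => FC end.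

Lemma file_idxK : cancel file_idx file_of_idx.
Proof. by case. Qed.

HB.instance Definition _ := Equality.copy file (can_type file_idxK).

Definition demand_orbit (D : demand) : list demand :=
  [seq iter a relabel_demand (iter b rotate_demand D) | a <- iota 0 3, b <- iota 0 3].

Lemma transferable_orbit z D D' : D' \in demand_orbit D -> transferable z D D'.
Proof.
case/allpairsP => -[a b] [_ _ ->] /=.
elim: a => [|a IHa]; last exact: transferable_trans IHa (transferable_relabel _ _).
elim: b => [|b IHb]; last exact: transferable_trans IHb (transferable_rotate _ _).
exact: transferable_refl.
Qed.

Lemma parts_in_orbits :
  all (fun P => all (fun D => all (mem (demand_orbit D)) P) P) parts.
Proof. by []. Qed.

Lemma In_mem (T : eqType) (x : T) (s : list T) : List.In x s -> x \in s.
Proof. by elim: s => //= y s IHs [-> | /IHs]; rewrite inE ?eqxx // orbC => ->. Qed.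

Theorem lemma1 (z : 'M['F_2]_(2, 30)) (P : list demand) (D D' : demand) :
  List.In P parts -> List.In D P -> List.In D' P ->
  exists2 pi : {perm 'I_30}, pi \in fg_group &
    forall (m : nat) (X : 'M['F_2]_(m, 30)),
      valid_delivery (Zuser z) D X ->
      valid_delivery (Zuser z) D' (col_perm pi X).
Proof.
move=> /In_mem P_part /In_mem D_P /In_mem D'_P; apply: transferable_orbit.
by have /allP/(_ P P_part)/allP/(_ D D_P)/allP := parts_in_orbits; apply.
Qed.
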